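(* Let $q$ be a prime power, $n\le m$ and $r\le\min\{n,m\}$. Let $\mathcal M$ be a set of $r$-dimensional subspaces of $\mathbb F_q^m$ with minimum subspace distance $d_{S,M}$, and let $\mathcal N$ be a set of $r$-dimensional subspaces of $\mathbb F_q^n$ with minimum subspace distance $d_{S,N}$. Then there exists a constant-rank code $\mathcal C$, i.e. a set of $m\times n$ matrices over $\mathbb F_q$ all of rank exactly $r$, of cardinality $\min\{|\mathcal M|,|\mathcal N|\}$, such that the column space of every element of $\mathcal C$ lies in $\mathcal M$ and the row space of every element of $\mathcal C$ lies in $\mathcal N$, and whose minimum rank distance $d_R$ satisfies $$d_R\ge\tfrac12 d_{S,M}+\tfrac12 d_{S,N};$$ and if moreover $|\mathcal M|=|\mathcal N|$, then additionally $d_R\le \tfrac12\min\{d_{S,M},d_{S,N}\}+r$.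
   Context: For subspaces $U,V$ of $\mathbb F_q^N$, the subspace distance is $d_S(U,V)=\dim(U+V)-\dim(U\cap V)$; the minimum subspace distance of a set of subspaces is the minimum of $d_S$ over pairs of distinct elements. The rank distance of two matrices $\mathbf X,\mathbf Y$ is $\mathrm{rk}(\mathbf X-\mathbf Y)$, and the minimum rank distance of a set of matrices is its minimum over distinct pairs. The column space of an $m\times n$ matrix is a subspace of $\mathbb F_q^m$, its row space a subspace of $\mathbb F_q^n$. *)

From HB Require Import structures.
From mathcomp Require Import all_boot all_order all_algebra.
Set Implicit Arguments. Unset Strict Implicit. Unset Printing Implicit Defensive.
Import GRing.Theory.
Local Open Scope ring_scope.

(* Subspaces of F^k are represented in mxalgebra style by their canonical
   square generator matrix U : 'M[F]_k with <<U>>%MS = U (row space of U). *)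
Definition is_subspace (F : fieldType) (k : nat) (U : 'M[F]_k) : bool :=
  (<<U>>%MS == U).

Definition subspace_dist (F : fieldType) (k : nat) (U V : 'M[F]_k) : nat :=
  (\rank (U + V)%MS - \rank (U :&: V)%MS)%N.

Definition rank_dist (F : fieldType) (m n : nat) (X Y : 'M[F]_(m, n)) : nat :=
  \rank (X - Y).

Definition colspace (F : fieldType) (m n : nat) (X : 'M[F]_(m, n)) : 'M[F]_m :=
  <<X^T>>%MS.
Definition rowspace (F : fieldType) (m n : nat) (X : 'M[F]_(m, n)) : 'M[F]_n :=
  <<X>>%MS.

(* d is the minimum of dist over pairs of distinct elements of S
   (in particular S has at least two elements, so the minimum exists). *)
Definition is_min_dist (T : finType) (dist : T -> T -> nat) (S : {set T}) (d : nat) : Prop :=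
  (exists x y, [/\ x \in S, y \in S, x != y & dist x y = d]) /\
  (forall x y, x \in S -> y \in S -> x != y -> (d <= dist x y)%N).

From HB Require Import structures.
From mathcomp Require Import all_boot all_order all_algebra.
From mathcomp Require Import zify.
Set Implicit Arguments. Unset Strict Implicit. Unset Printing Implicit Defensive.
Import GRing.Theory.
Local Open Scope ring_scope.

(* The code pairs the i-th subspace of M with the i-th subspace of N through
   U^T V, where the r rows of U and of V are bases of the two subspaces; this
   matrix has exactly those column and row spaces.  For any X, Y put
   a = dim(col X + col Y) and b = dim(row X + row Y), so that the two subspace
   distances are 2a - rk X - rk Y and 2b - rk X - rk Y.  As X - Y has its rows
   in row X + row Y, rk(X - Y) <= b (and likewise <= a), which is the upper
   bound 2 d_R <= d_S + 2r.  For the lower bound, the left kernel K of X gives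
   KY = -K(X - Y) inside row(X - Y) :&: row Y, of dimension a - rk X; hence
   b <= dim(row(X - Y) + row Y) <= rk(X - Y) + rk Y - (a - rk X), i.e. the sum
   of the two subspace distances is at most 2 rk(X - Y). *)

Section RankEstimates.

Variables (F : fieldType) (m n : nat).
Implicit Types X Y : 'M[F]_(m, n).

Lemma mxrank_tr_adds_le_mul_ker X Y :
  (\rank (X^T + Y^T)%MS <= \rank (kermx X *m Y) + \rank X)%N.
Proof.
have rank_mul_ker := mxrank_mul_ker (kermx X) Y.
have common_ker : (\rank (kermx X :&: kermx Y)%MS <= \rank (kermx (row_mx X Y)))%N.
  apply: mxrankS; apply/sub_kermxP; rewrite mul_mx_row.
  by rewrite !(sub_kermxP (capmxSl _ _)) !(sub_kermxP (capmxSr _ _)) row_mx0.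
have rank_row_mx : \rank (row_mx X Y) = \rank (X^T + Y^T)%MS.
  by rewrite -mxrank_tr tr_row_mx addsmxE.
rewrite !mxrank_ker rank_row_mx in rank_mul_ker common_ker.
have := rank_leq_row X; have := rank_leq_row (row_mx X Y); rewrite rank_row_mx.
lia.
Qed.

Lemma mxrank_mul_ker_le_cap X Y :
  (\rank (kermx X *m Y) <= \rank ((X - Y)%R :&: Y)%MS)%N.
Proof.
apply: mxrankS; rewrite sub_capmx submxMl andbT.
have -> : kermx X *m Y = - (kermx X *m (X - Y)).
  by rewrite mulmxBr mulmx_ker sub0r opprK.
by rewrite eqmx_opp submxMl.
Qed.

Lemma mxrank_adds_tr_le X Y :
  (\rank (X + Y)%MS + \rank (X^T + Y^T)%MS <= \rank (X - Y)%R + \rank X + \rank Y)%N.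
Proof.
have row_sum : (\rank (X + Y)%MS <= \rank ((X - Y)%R + Y)%MS)%N.
  apply: mxrankS; rewrite addsmx_sub addsmxSr andbT.
  by rewrite -{1}(subrK Y X) addmx_sub_adds.
have := mxrank_sum_cap (X - Y) Y.
have := mxrank_tr_adds_le_mul_ker X Y; have := mxrank_mul_ker_le_cap X Y.
lia.
Qed.

Lemma mxrank_sub_le_adds X Y : (\rank (X - Y)%R <= \rank (X + Y)%MS)%N.
Proof. by apply: mxrankS; rewrite addmx_sub_adds // eqmx_opp. Qed.

End RankEstimates.

Lemma subspace_dist_genmx (F : fieldType) (k p q : nat)
    (A : 'M[F]_(p, k)) (B : 'M[F]_(q, k)) :
  subspace_dist <<A>>%MS <<B>>%MS = (2 * \rank (A + B)%MS - \rank A - \rank B)%N.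
Proof.
rewrite /subspace_dist.
have := mxrank_sum_cap <<A>>%MS <<B>>%MS.
by rewrite (adds_eqmx (genmxE A) (genmxE B)) !genmxE; lia.
Qed.

Section ColspaceRowspaceDistances.

Variables (F : fieldType) (m n : nat) (X Y : 'M[F]_(m, n)).

Lemma colspace_dist_rowspace_dist_le :
  (subspace_dist (colspace X) (colspace Y)
   + subspace_dist (rowspace X) (rowspace Y) <= 2 * rank_dist X Y)%N.
Proof.
rewrite /colspace /rowspace /rank_dist !subspace_dist_genmx !mxrank_tr.
have := mxrank_adds_tr_le X Y.
have := mxrankS (addsmxSl X Y); have := mxrankS (addsmxSr X Y).
have := mxrankS (addsmxSl X^T Y^T); have := mxrankS (addsmxSr X^T Y^T).
by rewrite !mxrank_tr; lia.
Qed.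

Lemma rank_dist_le_rowspace_dist :
  (2 * rank_dist X Y <= subspace_dist (rowspace X) (rowspace Y) + \rank X + \rank Y)%N.
Proof.
rewrite /rowspace /rank_dist subspace_dist_genmx.
have := mxrank_sub_le_adds X Y.
have := mxrankS (addsmxSl X Y); have := mxrankS (addsmxSr X Y).
lia.
Qed.

End ColspaceRowspaceDistances.

Lemma rank_dist_tr (F : fieldType) (m n : nat) (X Y : 'M[F]_(m, n)) :
  rank_dist X^T Y^T = rank_dist X Y.
Proof. by rewrite /rank_dist -raddfB mxrank_tr. Qed.

Lemma rank_dist_le_colspace_dist (F : fieldType) (m n : nat) (X Y : 'M[F]_(m, n)) :
  (2 * rank_dist X Y <= subspace_dist (colspace X) (colspace Y) + \rank X + \rank Y)%N.
Proof.
rewrite -rank_dist_tr -(mxrank_tr X) -(mxrank_tr Y).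
exact: rank_dist_le_rowspace_dist.
Qed.

(* An r x k matrix whose rows form a basis of U when \rank U = r; the size is
   fixed to r rather than \rank U so that the type does not depend on U. *)
Definition row_basis (F : fieldType) (r k : nat) (U : 'M[F]_k) : 'M[F]_(r, k) :=
  pid_mx r *m row_ebase U.

Lemma row_basisP (F : fieldType) (r k : nat) (U : 'M[F]_k) :
  \rank U = r -> (row_basis r U :=: U)%MS /\ \rank (row_basis r U) = r.
Proof. by move=> <-; split; [exact: eq_row_base | exact/eqP/row_base_free]. Qed.

Definition pair_mx (F : fieldType) (r m n : nat) (U : 'M[F]_m) (V : 'M[F]_n) :
    'M[F]_(m, n) :=
  (row_basis r U)^T *m row_basis r V.

Lemma pair_mxP (F : fieldType) (r m n : nat) (U : 'M[F]_m) (V : 'M[F]_n) :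
  is_subspace U -> is_subspace V -> \rank U = r -> \rank V = r ->
  [/\ colspace (pair_mx r U V) = U, rowspace (pair_mx r U V) = V
    & \rank (pair_mx r U V) = r].
Proof.
move=> /eqP genU /eqP genV /row_basisP[eqU rankU] /row_basisP[eqV rankV].
have fullU : row_full (row_basis r U)^T by rewrite /row_full mxrank_tr rankU.
have fullV : row_full (row_basis r V)^T by rewrite /row_full mxrank_tr rankV.
have eq_row : (pair_mx r U V :=: V)%MS := eqmx_trans (eqmxMfull _ fullU) eqV.
have eq_col : ((pair_mx r U V)^T :=: U)%MS.
  by rewrite trmx_mul trmxK; apply: eqmx_trans (eqmxMfull _ fullV) eqU.
by rewrite /colspace /rowspace (eq_genmx eq_row) (eq_genmx eq_col) genU genV eq_row -eqV rankV.
Qed.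

Lemma exists_min_dist (T : finType) (dist : T -> T -> nat) (S : {set T}) :
  (1 < #|S|)%N -> exists d, is_min_dist dist S d.
Proof.
case/card_gt1P=> x0 [y0 [x0S y0S x0y0]].
pose P (d : nat) := [exists x in S, exists y in S, (x != y) && (dist x y == d)].
have P_dist x y : x \in S -> y \in S -> x != y -> P (dist x y).
  move=> xS yS xy; apply/existsP; exists x; rewrite xS /=.
  by apply/existsP; exists y; rewrite yS xy eqxx.
have [d Pd d_min] := ex_minnP (ex_intro P _ (P_dist _ _ x0S y0S x0y0)).
exists d; split=> [|x y xS yS xy]; last exact/d_min/P_dist.
by case/existsP: Pd => x /andP[xS /existsP[y /and3P[yS xy /eqP dxy]]]; exists x, y.
Qed.

Lemma min_dist_card_gt1 (T : finType) (dist : T -> T -> nat) (S : {set T}) d :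
  is_min_dist dist S d -> (1 < #|S|)%N.
Proof. by case=> [[x [y [xS yS xy _]]] _]; apply/card_gt1P; exists x, y. Qed.

Lemma enum_val_widen_onto (T : finType) (A : {set T}) k (le_k : (k <= #|A|)%N) x :
  (#|A| <= k)%N -> x \in A -> exists i : 'I_k, enum_val (widen_ord le_k i) = x.
Proof.
move=> le_A xA; have lt_k : (enum_rank_in xA x < k)%N := leq_trans (ltn_ord _) le_A.
exists (Ordinal lt_k).
by rewrite (_ : widen_ord _ _ = enum_rank_in xA x) ?enum_rankK_in //; apply: val_inj.
Qed.

Section PairingCode.

Variables (F : finFieldType) (m n r : nat).
Variables (M : {set 'M[F]_m}) (N : {set 'M[F]_n}).
Hypothesis M_subspaces : forall U, U \in M -> is_subspace U /\ \rank U = r.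
Hypothesis N_subspaces : forall V, V \in N -> is_subspace V /\ \rank V = r.

Local Notation k := (minn #|M| #|N|).

Definition code_col (i : 'I_k) : 'M[F]_m := enum_val (widen_ord (geq_minl #|M| #|N|) i).
Definition code_row (i : 'I_k) : 'M[F]_n := enum_val (widen_ord (geq_minr #|M| #|N|) i).
Definition code_word (i : 'I_k) : 'M[F]_(m, n) := pair_mx r (code_col i) (code_row i).
Definition pairing_code : {set 'M[F]_(m, n)} := [set code_word i | i : 'I_k].

Lemma code_wordP i :
  [/\ colspace (code_word i) = code_col i, rowspace (code_word i) = code_row i
    & \rank (code_word i) = r].
Proof.
have [subU rankU] := M_subspaces (enum_valP (widen_ord (geq_minl #|M| #|N|) i)).
have [subV rankV] := N_subspaces (enum_valP (widen_ord (geq_minr #|M| #|N|) i)).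
exact: pair_mxP.
Qed.

Lemma code_col_inj : injective code_col.
Proof. by move=> i j /enum_val_inj/(congr1 val) eq_ij; apply: val_inj. Qed.

Lemma code_row_inj : injective code_row.
Proof. by move=> i j /enum_val_inj/(congr1 val) eq_ij; apply: val_inj. Qed.

Lemma pairing_codeP X :
  X \in pairing_code -> exists i, [/\ X = code_word i, colspace X = code_col i,
                                    rowspace X = code_row i & \rank X = r].
Proof. by case/imsetP=> i _ ->; exists i; have [] := code_wordP i. Qed.

Lemma mem_pairing_code i : code_word i \in pairing_code.
Proof. exact: imset_f. Qed.

Lemma card_pairing_code : #|pairing_code| = k.
Proof.
rewrite card_imset ?card_ord // => i j eq_ij; apply: code_col_inj.
by have [<- _ _] := code_wordP i; rewrite eq_ij; have [] := code_wordP j.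
Qed.

Lemma pairing_code_min_dist_ge dSM dSN dR :
  is_min_dist (@subspace_dist F m) M dSM -> is_min_dist (@subspace_dist F n) N dSN ->
  is_min_dist (@rank_dist F m n) pairing_code dR -> (dSM + dSN <= 2 * dR)%N.
Proof.
move=> [_ min_M] [_ min_N] [[X [Y [XC YC XY <-]]] _].
have [i [eX col_i row_i _]] := pairing_codeP XC.
have [j [eY col_j row_j _]] := pairing_codeP YC.
subst X Y.
have ij : i != j by apply: contraNneq XY => ->.
have col_ij : code_col i != code_col j by rewrite (inj_eq code_col_inj).
have row_ij : code_row i != code_row j by rewrite (inj_eq code_row_inj).
have := min_M (code_col i) (code_col j) (enum_valP _) (enum_valP _) col_ij.
have := min_N (code_row i) (code_row j) (enum_valP _) (enum_valP _) row_ij.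
have := colspace_dist_rowspace_dist_le (code_word i) (code_word j).
rewrite col_i col_j row_i row_j; lia.
Qed.

Lemma pairing_code_min_dist_le_colspace dSM dR :
  (#|M| <= #|N|)%N -> is_min_dist (@subspace_dist F m) M dSM ->
  is_min_dist (@rank_dist F m n) pairing_code dR -> (2 * dR <= dSM + 2 * r)%N.
Proof.
move=> le_MN [[U [U' [UM U'M UU' <-]]] _] [_ min_C].
have le_M_k : (#|M| <= k)%N by rewrite leq_min leqnn.
have [i col_i] := enum_val_widen_onto (geq_minl #|M| #|N|) le_M_k UM.
have [j col_j] := enum_val_widen_onto (geq_minl #|M| #|N|) le_M_k U'M.
have {col_i col_j} [col_i col_j] : code_col i = U /\ code_col j = U' by [].
have [col_wi _ rank_i] := code_wordP i; have [col_wj _ rank_j] := code_wordP j.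
have ij : code_word i != code_word j.
  by apply: contraNneq UU' => eq_ij; rewrite -col_i -col_j -col_wi -col_wj eq_ij.
have := min_C _ _ (mem_pairing_code i) (mem_pairing_code j) ij.
have := rank_dist_le_colspace_dist (code_word i) (code_word j).
rewrite col_wi col_wj col_i col_j rank_i rank_j; lia.
Qed.

Lemma pairing_code_min_dist_le_rowspace dSN dR :
  (#|N| <= #|M|)%N -> is_min_dist (@subspace_dist F n) N dSN ->
  is_min_dist (@rank_dist F m n) pairing_code dR -> (2 * dR <= dSN + 2 * r)%N.
Proof.
move=> le_NM [[V [V' [VN V'N VV' <-]]] _] [_ min_C].
have le_N_k : (#|N| <= k)%N by rewrite leq_min leqnn andbT.
have [i row_i] := enum_val_widen_onto (geq_minr #|M| #|N|) le_N_k VN.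
have [j row_j] := enum_val_widen_onto (geq_minr #|M| #|N|) le_N_k V'N.
have {row_i row_j} [row_i row_j] : code_row i = V /\ code_row j = V' by [].
have [_ row_wi rank_i] := code_wordP i; have [_ row_wj rank_j] := code_wordP j.
have ij : code_word i != code_word j.
  by apply: contraNneq VV' => eq_ij; rewrite -row_i -row_j -row_wi -row_wj eq_ij.
have := min_C _ _ (mem_pairing_code i) (mem_pairing_code j) ij.
have := rank_dist_le_rowspace_dist (code_word i) (code_word j).
rewrite row_wi row_wj row_i row_j rank_i rank_j; lia.
Qed.

End PairingCode.

Theorem proposition2 (F : finFieldType) (m n r : nat)
  (Hnm : (n <= m)%N) (Hr : (r <= minn n m)%N)
  (M : {set 'M[F]_m}) (N : {set 'M[F]_n}) (dSM dSN : nat)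
  (HMsub : forall U, U \in M -> is_subspace U /\ \rank U = r)
  (HNsub : forall V, V \in N -> is_subspace V /\ \rank V = r)
  (HdM : is_min_dist (@subspace_dist F m) M dSM)
  (HdN : is_min_dist (@subspace_dist F n) N dSN) :
  exists (C : {set 'M[F]_(m, n)}) (dR : nat),
    #|C| = minn #|M| #|N| /\
    (forall X, X \in C -> \rank X = r) /\
    (forall X, X \in C -> colspace X \in M) /\
    (forall X, X \in C -> rowspace X \in N) /\
    is_min_dist (@rank_dist F m n) C dR /\
    (dSM + dSN <= 2 * dR)%N /\
    (#|M| = #|N| -> (2 * dR <= minn dSM dSN + 2 * r)%N).
Proof.
set C := pairing_code r M N.
have card_C : #|C| = minn #|M| #|N| by exact: card_pairing_code.
have [dR HdR] : exists dR, is_min_dist (@rank_dist F m n) C dR.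
  apply: exists_min_dist; rewrite card_C leq_min.
  by rewrite (min_dist_card_gt1 HdM) (min_dist_card_gt1 HdN).
exists C, dR; split=> //.
split; first by move=> X /(pairing_codeP HMsub HNsub)[i [_ _ _ ->]].
split; first by move=> X /(pairing_codeP HMsub HNsub)[i [_ -> _ _]]; exact: enum_valP.
split; first by move=> X /(pairing_codeP HMsub HNsub)[i [_ _ -> _]]; exact: enum_valP.
split=> //; split; first exact: pairing_code_min_dist_ge HdM HdN HdR.
move=> eq_MN.
have := pairing_code_min_dist_le_colspace HMsub HNsub (eq_leq eq_MN) HdM HdR.
have := pairing_code_min_dist_le_rowspace HMsub HNsub (eq_leq (esym eq_MN)) HdN HdR.
lia.
Qed.
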